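(* Let $G_n=H_0H_1\cdots H_{n-1}$ be a spiro hexagonal chain with $n$ hexagons, and let $c_k$ be the common cut-vertex of $H_{k-1}$ and $H_k$, $1\le k\le n-1$. Then $$W(G_n)=5\sum_{k=1}^{n-1}\sum_{i=1}^{k}f(c_i)+\frac{45}{2}n^2+\frac{9}{2}n=5\sum_{k=1}^{n-1}(n-k)f(c_k)+\frac{45}{2}n^2+\frac{9}{2}n,$$ where $f(c_1)=9$ and, for $k\ge2$, $f(c_k)=5(k-1)+9$ if $c_k$ is $o_{k-1}$, $f(c_k)=10(k-1)+9$ if $c_k$ is $m_{k-1}$, and $f(c_k)=15(k-1)+9$ if $c_k$ is $p_{k-1}$.
   Context: All graphs are simple and connected; $d(u,v)$ is the shortest-path distance, and the Wiener index is $W(G)=\sum_{\{u,v\}\subseteq V(G)}d_G(u,v)$. A spiro hexagonal chain of length $n$, $G_n=H_0H_1\cdots H_{n-1}$, is a connected graph in which every block is a hexagon (6-cycle) $H_0,\dots,H_{n-1}$, each hexagon has at most two cut-vertices, each cut-vertex is shared by exactly two hexagons, and for $k=1,\dots,n-1$ the hexagons $H_{k-1}$ and $H_k$ share the cut-vertex $c_k$. For $k\ge1$, a vertex of $H_k$ at distance $1$, $2$, $3$ from $c_k$ is called an ortho-, meta-, para-vertex of $H_k$, denoted $o_k,m_k,p_k$ respectively. For $2\le k\le n-1$, $c_k$ is a vertex of $H_{k-1}$ different from $c_{k-1}$, hence one of $o_{k-1},m_{k-1},p_{k-1}$. *)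

From HB Require Import structures.
From mathcomp Require Import all_boot all_order all_algebra.
Set Implicit Arguments. Unset Strict Implicit. Unset Printing Implicit Defensive.

(* Shortest-path distance in a graph given by an edge relation e on a finType:
   the least m < #|T| such that there is a walk of length m from u to v
   (for a connected graph on T this is the usual graph distance). *)
Section GraphDist.
Variable T : finType.
Variable e : rel T.
Definition walkb (m : nat) (u v : T) : bool :=
  [exists p : m.-tuple T, path e u p && (last u p == v)].
Definition gdist (u v : T) : nat := find (fun m => walkb m u v) (iota 0 #|T|).
End GraphDist.

Definition wiener (N : nat) (e : rel 'I_N) : nat :=
  \sum_(u : 'I_N) \sum_(v : 'I_N | (u < v)%N) gdist e u v.

(* Concrete spiro hexagonal chain G_n = H_0 ... H_{n-1} on vertices 0 .. 5n.
   hexv s k j = the j-th vertex (j = 0..5, in cyclic order) of hexagon H_k.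
   For k >= 1, vertex 0 of H_k is the cut vertex c_k, which is the vertex at
   position s k of H_{k-1}; the other vertices of H_k are the new vertices
   5k+1, ..., 5k+5 (in cyclic order). *)
Fixpoint hexv (s : nat -> nat) (k j : nat) : nat :=
  match k, j with
  | 0, _ => j
  | k'.+1, 0 => hexv s k' (s k)
  | _, _ => 5 * k + j
  end.

Definition cutv (s : nat -> nat) (k : nat) : nat := hexv s k 0.

(* Admissible position data: c_k is a vertex of H_{k-1}, and for k >= 2 it is
   different from c_{k-1} (= position 0 of H_{k-1}). *)
Definition spiro_data (n : nat) (s : nat -> nat) : Prop :=
  forall k, (1 <= k < n)%N -> (s k < 6)%N /\ ((2 <= k)%N -> (0 < s k)%N).

Definition spiro_adj (n : nat) (s : nat -> nat) : rel 'I_(5 * n).+1 :=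
  fun u v =>
    [exists k : 'I_n, exists j : 'I_6,
       ((val u == hexv s k j) && (val v == hexv s k ((j + 1) %% 6)))
    || ((val v == hexv s k j) && (val u == hexv s k ((j + 1) %% 6)))].

Arguments spiro_adj : clear implicits.

Definition hexdist (i j : nat) : nat :=
  let a := if (i <= j)%N then j - i else i - j in minn a (6 - a).

(* For k >= 2: c_k is the vertex at position s k of H_{k-1}, c_{k-1} is at
   position 0 of H_{k-1}. *)
Definition is_ortho (s : nat -> nat) (k : nat) : bool := hexdist 0 (s k) == 1.
Definition is_meta  (s : nat -> nat) (k : nat) : bool := hexdist 0 (s k) == 2.
Definition is_para  (s : nat -> nat) (k : nat) : bool := hexdist 0 (s k) == 3.

Definition fc (s : nat -> nat) (k : nat) : nat :=
  if k == 1 then 9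
  else if is_ortho s k then 5 * (k - 1) + 9
  else if is_meta s k then 10 * (k - 1) + 9
  else if is_para s k then 15 * (k - 1) + 9
  else 0.

From mathcomp Require Import all_boot all_order all_algebra.
From mathcomp Require Import zify ring lra.
Import GRing.Theory Num.Theory.
Set Implicit Arguments. Unset Strict Implicit. Unset Printing Implicit Defensive.

(* The blocks of G_n form a path H_0 - H_1 - ... - H_(n-1), so a shortest
   u-v path crosses each hexagon H_k between the vertices of H_k nearest to u
   and to v: d(u, v) is the sum over k of the hexagon distances between these
   two projections of u and v onto H_k.  Summing over all pairs, for fixed k
   the 5k + 1 vertices up to c_k project onto c_k (vertex 0 of H_0 if k = 0),
   the 5(n-1-k) vertices beyond H_k project onto c_(k+1), and the remaining
   five vertices of H_k onto themselves.  As every vertex of a hexagon has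
   total distance 9 to the others, H_k contributes
   27 + 45(n-1) + 25k(n-1-k) d(c_k, c_(k+1)) to W(G_n), and summing over k
   gives the formula, since f(c_k) = 5(k-1) d(c_(k-1), c_k) + 9. *)

Lemma find_iota0 (P : pred nat) N m : m < N -> P m ->
  (forall i, i < m -> ~~ P i) -> find P (iota 0 N) = m.
Proof.
move=> ltmN Pm minm; have hasP : has P (iota 0 N).
  by apply/hasP; exists m; rewrite ?mem_iota.
have ltfN : find P (iota 0 N) < N by move: hasP; rewrite has_find size_iota.
case: (ltngtP (find P (iota 0 N)) m) => [lt|gt|//].
- by have := nth_find 0 hasP; rewrite nth_iota // add0n (negbTE (minm _ lt)).
- by have := before_find 0 gt; rewrite nth_iota ?add0n ?Pm //; lia.
Qed.

Section GdistCharacterization.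
Variables (T : finType) (e : rel T) (d : T -> T -> nat).
Hypothesis d_eq0 : forall u v, (d u v == 0) = (u == v).
Hypothesis d_edge : forall u w v, e u w -> d u v <= (d w v).+1.
Hypothesis d_descent : forall m u v, d u v = m.+1 -> exists2 w, e u w & d w v = m.
Hypothesis d_lt_card : forall u v, d u v < #|T|.

Lemma path_dist_le u p : path e u p -> d u (last u p) <= size p.
Proof.
elim: p u => [|w p IHp] u /=; first by have := d_eq0 u u; rewrite eqxx => /eqP->.
by case/andP=> euw /IHp; have := d_edge (last w p) euw; lia.
Qed.

Lemma walkb_dist m u v : d u v = m -> walkb e m u v.
Proof.
elim: m u => [|m IHm] u duv.
  have /eqP-> : u == v by rewrite -d_eq0 duv.
  by apply/existsP; exists [tuple]; rewrite /= eqxx.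
have [w euw /IHm /existsP[p /andP[wp /eqP lastp]]] := d_descent duv.
by apply/existsP; exists (cons_tuple w p); rewrite /= euw wp lastp eqxx.
Qed.

Lemma gdist_eq u v : gdist e u v = d u v.
Proof.
apply: find_iota0; [exact: d_lt_card | exact: walkb_dist |].
move=> i ltid; apply/existsP=> -[p /andP[up /eqP lastp]].
by have := path_dist_le up; rewrite lastp size_tuple; lia.
Qed.

End GdistCharacterization.

Lemma hexdistC a b : hexdist a b = hexdist b a.
Proof. by rewrite /hexdist; case: ifP; case: ifP; lia. Qed.

Lemma hexdistnn a : hexdist a a = 0.
Proof. by rewrite /hexdist leqnn subnn. Qed.

Lemma hexdist_le3 a b : hexdist a b <= 3.
Proof. by rewrite /hexdist; case: ifP; lia. Qed.

Lemma hexdist_eq0 a b : a < 6 -> b < 6 -> (hexdist a b == 0) = (a == b).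
Proof. by rewrite /hexdist => *; case: ifP; lia. Qed.

Lemma hexdist_triangle a b c : a < 6 -> b < 6 -> c < 6 ->
  hexdist a c <= hexdist a b + hexdist b c.
Proof. by rewrite /hexdist => *; case: ifP; case: ifP; case: ifP; lia. Qed.

Lemma hexdist_succ j : j < 6 -> hexdist j ((j + 1) %% 6) = 1.
Proof. by rewrite /hexdist => *; case: ifP; lia. Qed.

Definition hexstep (j t : nat) : nat :=
  if hexdist ((j + 1) %% 6) t < hexdist j t then (j + 1) %% 6 else (j + 5) %% 6.

Lemma hexstep_lt6 j t : hexstep j t < 6.
Proof. by rewrite /hexstep; case: ifP; lia. Qed.

Lemma hexdist_step j t : j < 6 -> t < 6 -> j != t ->
  (hexdist (hexstep j t) t).+1 = hexdist j t.
Proof.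
move=> ltj ltt; case: j ltj => [|[|[|[|[|[|j]]]]]] // _.
all: by case: t ltt => [|[|[|[|[|[|t]]]]]].
Qed.

Lemma sum_hexdist t : t < 6 -> \sum_(i < 6) hexdist i t = 9.
Proof. by rewrite !big_ord_recr big_ord0 /hexdist /=; do 6?case: t => [|t] //. Qed.

(* Position in [H_k] of the vertex of [H_k] nearest to vertex [x]: [x] itself
   if it lies on [H_k], else the cut vertex [c_k] (position 0) if [x] comes
   before [H_k], and [c_(k+1)] (position [s k.+1]) if it comes after. *)
Definition hexproj (s : nat -> nat) (k x : nat) : nat :=
  if x <= 5 * k then 0 else if x <= 5 * k + 5 then x - 5 * k else s k.+1.

Definition spiro_dist (n : nat) (s : nat -> nat) (x y : nat) : nat :=
  \sum_(k < n) hexdist (hexproj s k x) (hexproj s k y).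

Section SpiroProjection.
Variables (n : nat) (s : nat -> nat).
Hypothesis hs : spiro_data n s.

Lemma hexproj_hexv k0 j k : k0 < n -> j < 6 ->
  hexproj s k (hexv s k0 j) = if k == k0 then j else if k < k0 then s k.+1 else 0.
Proof.
elim: k0 j => [|k0 IHk0] j ltk0n ltj6.
  by rewrite /hexproj /=; case: k => [|k] /=; do ?case: ifP; lia.
case: j ltj6 => [|j] ltj6 /=.
  have [lts6 _] := hs (k := k0.+1) ltac:(lia).
  by rewrite IHk0 //; [case: eqP => [->|]; do ?case: ifP; lia | lia].
by rewrite /hexproj; do ?case: ifP; lia.
Qed.

Lemma hexv_le k j : k < n -> j < 6 -> hexv s k j <= 5 * k + 5.
Proof.
elim: k j => [|k IHk] j ltkn ltj6; first by rewrite /=; lia.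
case: j ltj6 => [|j] ltj6 /=; last by lia.
have [lts6 _] := hs (k := k.+1) ltac:(lia).
by have := IHk _ ltac:(lia) lts6; lia.
Qed.

Lemma hexproj_lt6 k x : k < n -> x <= 5 * n -> hexproj s k x < 6.
Proof.
rewrite /hexproj => ltkn lex5n; case: ifP => // _; case: ifP => [|/negbT]; first lia.
by rewrite -ltnNge => ?; have [] := hs (k := k.+1) ltac:(lia).
Qed.

Lemma spiro_dist_same_hex k0 j j' w : k0 < n -> j < 6 -> j' < 6 ->
  spiro_dist n s (hexv s k0 j) w + hexdist j' (hexproj s k0 w)
  = spiro_dist n s (hexv s k0 j') w + hexdist j (hexproj s k0 w).
Proof.
move=> ltk0n ltj6 ltj'6; rewrite /spiro_dist (bigD1 (Ordinal ltk0n)) //.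
rewrite [in RHS](bigD1 (Ordinal ltk0n)) //=.
rewrite !hexproj_hexv // eqxx.
have others j1 : j1 < 6 ->
    \sum_(k < n | k != Ordinal ltk0n) hexdist (hexproj s k (hexv s k0 j1)) (hexproj s k w)
  = \sum_(k < n | k != Ordinal ltk0n) hexdist (if k < k0 then s k.+1 else 0) (hexproj s k w).
  move=> ltj16; apply: eq_bigr => k /negPf nek0.
  by rewrite hexproj_hexv // -val_eqE /= in nek0 *; rewrite nek0.
by rewrite !others //; lia.
Qed.

End SpiroProjection.

Lemma hexv_onto n s x : 0 < n -> x <= 5 * n ->
  exists k j, [/\ k < n, j < 6, x = hexv s k j & 0 < k -> 0 < j].
Proof.
move=> n_gt0 lex5n; have [lex5|] := leqP x 5; first by exists 0, x; split => //; lia.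
move=> lt5x; exists ((x.-1) %/ 5).-1.+1, ((x.-1) %% 5).+1; split=> /=; lia.
Qed.

Section SpiroDistance.
Variables (n : nat) (s : nat -> nat).
Hypotheses (n_gt0 : 0 < n) (hs : spiro_data n s).
Local Notation V := 'I_(5 * n).+1.

Lemma vertex_le (u : V) : u <= 5 * n.
Proof. by rewrite -ltnS. Qed.

Lemma spiro_adjP (u w : V) : spiro_adj n s u w ->
  exists k j j', [/\ k < n, j < 6, j' < 6, hexdist j j' = 1 &
                     u = hexv s k j :> nat /\ w = hexv s k j' :> nat].
Proof.
case/existsP=> k /existsP[j /orP[]] /andP[/eqP eu /eqP ew].
- by exists k, j, ((j + 1) %% 6); rewrite hexdist_succ // ltn_pmod.
- by exists k, ((j + 1) %% 6), j; rewrite hexdistC hexdist_succ // ltn_pmod.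
Qed.

Lemma spiro_adj_hexstep (u w : V) k j t : k < n -> j < 6 ->
  u = hexv s k j :> nat -> w = hexv s k (hexstep j t) :> nat -> spiro_adj n s u w.
Proof.
move=> ltkn ltj6 eu ew; apply/existsP; exists (Ordinal ltkn).
move: ew; rewrite /hexstep; case: ifP => _ ew.
  by apply/existsP; exists (Ordinal ltj6); rewrite /= eu ew !eqxx.
have ltj'6 : (j + 5) %% 6 < 6 by lia.
apply/existsP; exists (Ordinal ltj'6); rewrite /= eu ew eqxx /=.
have -> : ((j + 5) %% 6 + 1) %% 6 = j by lia.
by rewrite eqxx orbT.
Qed.

Lemma spiro_dist_edge (u w v : V) : spiro_adj n s u w ->
  spiro_dist n s u v <= (spiro_dist n s w v).+1.
Proof.
case/spiro_adjP=> k [j [j' [ltkn ltj6 ltj'6 djj' [-> ->]]]].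
have := spiro_dist_same_hex hs v ltkn ltj6 ltj'6.
have := hexdist_triangle ltj6 ltj'6 (hexproj_lt6 hs ltkn (vertex_le v)).
lia.
Qed.

Lemma exists_hexv_off_proj (u v : V) : u != v ->
  exists k j, [/\ k < n, j < 6, u = hexv s k j :> nat & j != hexproj s k v].
Proof.
move=> neuv.
have [k [j [ltkn ltj6 eu pos_j]]] := hexv_onto s n_gt0 (vertex_le u).
have [k' [j' [ltk'n ltj'6 ev pos_j']]] := hexv_onto s n_gt0 (vertex_le v).
have [ej|nej] := eqVneq j (hexproj s k v); last by exists k, j.
move: ej; rewrite ev (hexproj_hexv hs) //.
case: (ltngtP k k') => [ltkk'|ltk'k|ekk'] ej.
- (* [u] is the cut vertex [c_(k+1)], i.e. position 0 of [H_(k+1)]. *)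
  exists k.+1, 0; rewrite /= -ej -eu (hexproj_hexv hs) //.
  split; [lia | by [] | by [] |].
  have [ek1k'|nek1k'] := eqVneq k.+1 k'.
    by move: pos_j'; rewrite -ek1k' => /(_ isT); lia.
  have [_ pos_s] := hs (k := k.+2) ltac:(lia).
  have ltk1k' : k.+1 < k' by lia.
  by rewrite /= ltk1k'; have := pos_s isT; lia.
- lia.
- by case/eqP: neuv; apply: val_inj; rewrite /= eu ev ekk' ej.
Qed.

Lemma spiro_dist_eq0 (u v : V) : (spiro_dist n s u v == 0) = (u == v).
Proof.
have [->|/exists_hexv_off_proj[k [j [ltkn ltj6 eu nej]]]] := eqVneq u v.
  by rewrite /spiro_dist big1 // => k _; rewrite hexdistnn.
rewrite /spiro_dist (bigD1 (Ordinal ltkn)) //= eu (hexproj_hexv hs) // eqxx.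
by rewrite addn_eq0 hexdist_eq0 ?(negPf nej) ?(hexproj_lt6 hs ltkn (vertex_le v)).
Qed.

Lemma spiro_dist_descent m (u v : V) : spiro_dist n s u v = m.+1 ->
  exists2 w : V, spiro_adj n s u w & spiro_dist n s w v = m.
Proof.
move=> duv; have /exists_hexv_off_proj[k [j [ltkn ltj6 eu nej]]] : u != v.
  by rewrite -spiro_dist_eq0 duv.
pose t := hexproj s k v; pose j' := hexstep j t.
have ltt6 : t < 6 := hexproj_lt6 hs ltkn (vertex_le v).
have ltj'6 : j' < 6 := hexstep_lt6 j t.
have ltw : hexv s k j' < (5 * n).+1 by have := hexv_le hs ltkn ltj'6; lia.
exists (Ordinal ltw); first exact: (spiro_adj_hexstep ltkn ltj6 eu).
have := spiro_dist_same_hex hs v ltkn ltj6 ltj'6; have := hexdist_step ltj6 ltt6 nej.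
rewrite -eu /= -/t -/j'; lia.
Qed.

Lemma spiro_dist_lt_card (u v : V) : spiro_dist n s u v < #|V|.
Proof.
rewrite card_ord ltnS (@leq_trans (\sum_(k < n) 3)) //.
  by apply: leq_sum => k _; apply: hexdist_le3.
by rewrite big_const_ord iter_addn_0; lia.
Qed.

Lemma gdist_spiro (u v : V) : gdist (spiro_adj n s) u v = spiro_dist n s u v.
Proof.
exact: gdist_eq spiro_dist_eq0 spiro_dist_edge spiro_dist_descent spiro_dist_lt_card u v.
Qed.

End SpiroDistance.

Lemma sum_hexproj n s k (G : nat -> nat) : k < n ->
  \sum_(x < (5 * n).+1) G (hexproj s k x)
  = \sum_(j < 6) G j + 5 * k * G 0 + 5 * (n - 1 - k) * G (s k.+1).
Proof.
move=> ltkn; rewrite -(big_mkord xpredT (fun x => G (hexproj s k x))).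
rewrite (@big_cat_nat _ _ _ (5 * k)) //=; last lia.
rewrite (@big_cat_nat _ _ _ (5 * k + 6) (5 * k)) /=; [|lia|lia].
have before : \sum_(0 <= x < 5 * k) G (hexproj s k x) = 5 * k * G 0.
  rewrite (eq_big_nat _ _ (F2 := fun=> G 0)) ?sum_nat_const_nat ?subn0 // => x ltx.
  by rewrite /hexproj ifT //; lia.
have on_hex : \sum_(5 * k <= x < 5 * k + 6) G (hexproj s k x) = \sum_(j < 6) G j.
  rewrite -{1}[5 * k]add0n big_addn addKn -(big_mkord xpredT).
  apply: eq_big_nat => j ltj6.
  by rewrite /hexproj; do ?case: ifP => ?; congr G; lia.
have after :
    \sum_(5 * k + 6 <= x < (5 * n).+1) G (hexproj s k x) = 5 * (n - 1 - k) * G (s k.+1).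
  rewrite (eq_big_nat _ _ (F2 := fun=> G (s k.+1))) ?sum_nat_const_nat => [|x ltx].
    by congr (_ * _); lia.
  by rewrite /hexproj !ifF //; lia.
by rewrite before on_hex after addnCA addnA.
Qed.

Lemma sum_hexdist_hexproj n s k : spiro_data n s -> k < n ->
  \sum_(x < (5 * n).+1) \sum_(y < (5 * n).+1) hexdist (hexproj s k x) (hexproj s k y)
  = 54 + 90 * (n - 1) + 50 * k * (n - 1 - k) * hexdist 0 (s k.+1).
Proof.
move=> hs ltkn; set b := n - 1 - k; set t := s k.+1.
have col_sum i : i < 6 -> \sum_(j < 6) hexdist j i = 9 by exact: sum_hexdist.
have row_sum i : i < 6 -> \sum_(j < 6) hexdist i j = 9.
  by move=> lti6; rewrite -(col_sum i lti6); apply: eq_bigr => j _; rewrite hexdistC.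
(* [s n] is unconstrained, but for [k = n - 1] it only occurs with weight [b = 0]. *)
have b0_or_ltt6 : b = 0 \/ t < 6.
  by case: (posnP b) => [|b_gt0]; [left | right; have [] := hs k.+1 ltac:(lia)].
under eq_bigr => x _ do rewrite (sum_hexproj _ (hexdist (hexproj s k x)) ltkn) -/b -/t.
rewrite (sum_hexproj s (fun i => \sum_(j < 6) hexdist i j + 5 * k * hexdist i 0
                                 + 5 * b * hexdist i t) ltkn) -/b -/t.
rewrite !big_split /= -!big_distrr /= col_sum // (eq_bigr (fun=> 9)); last first.
  by move=> i _; apply: row_sum.
rewrite big_const_ord iter_addn_0 row_sum // !hexdistnn [hexdist t 0]hexdistC.
have -> : n - 1 = k + b by rewrite /b; lia.
case: b0_or_ltt6 => [->|ltt6]; last rewrite row_sum // col_sum //; ring.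
Qed.

Lemma sum_pairs_sym N (F : 'I_N -> 'I_N -> nat) :
  (forall u v, F u v = F v u) -> (forall u, F u u = 0) ->
  \sum_(u : 'I_N) \sum_(v : 'I_N) F u v = 2 * \sum_(u : 'I_N) \sum_(v : 'I_N | u < v) F u v.
Proof.
move=> FC F0; have split_row u :
    \sum_(v : 'I_N) F u v = \sum_(v : 'I_N | u < v) F u v + \sum_(v : 'I_N | v < u) F u v.
  rewrite (bigID (fun v : 'I_N => u < v)); congr (_ + _).
  rewrite (bigD1 u) /= ?ltnn // F0 add0n.
  by apply: eq_bigl => v; rewrite -leqNgt ltn_neqAle andbC.
under eq_bigr => u _ do rewrite split_row.
rewrite big_split /= mul2n -addnn; congr (_ + _).
rewrite (exchange_big_dep xpredT) //=.
by apply: eq_bigr => v _; apply: eq_bigr => u _; apply: FC.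
Qed.

Lemma double_wiener_spiro n s : 0 < n -> spiro_data n s ->
  2 * wiener (spiro_adj n s)
  = \sum_(k < n) (54 + 90 * (n - 1) + 50 * k * (n - 1 - k) * hexdist 0 (s k.+1)).
Proof.
move=> n_gt0 hs; rewrite /wiener.
under eq_bigr => u _ do under eq_bigr => v _ do rewrite gdist_spiro //.
rewrite -(@sum_pairs_sym _ (spiro_dist n s)); first last.
- by move=> u; apply/eqP; rewrite spiro_dist_eq0.
- by move=> u v; apply: eq_bigr => k _; apply: hexdistC.
rewrite /spiro_dist; under eq_bigr => u _ do rewrite exchange_big.
by rewrite exchange_big; apply: eq_bigr => k _; apply: sum_hexdist_hexproj.
Qed.

Lemma fc_cutdist n s k : spiro_data n s -> 1 <= k < n ->
  fc s k = 5 * (k - 1) * hexdist 0 (s k) + 9.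
Proof.
move=> hs ltk; rewrite /fc; have [->|nek1] := eqVneq k 1; first by rewrite muln0.
have [lts6 pos_s] := hs k ltk.
have : 0 < hexdist 0 (s k) <= 3.
  by rewrite hexdist_le3 lt0n hexdist_eq0 // eq_sym -lt0n pos_s //; lia.
by rewrite /is_ortho /is_meta /is_para; do ?case: ifP; lia.
Qed.

Lemma sum_partial_sums (f : nat -> nat) n :
  \sum_(1 <= k < n) \sum_(1 <= i < k.+1) f i = \sum_(1 <= k < n) (n - k) * f k.
Proof.
elim: n => [|n IHn]; first by rewrite !big_geq.
case: n IHn => [|n] IHn; first by rewrite !big_geq.
rewrite big_nat_recr //= IHn.
rewrite [RHS](eq_big_nat _ _ (F2 := fun k => (n.+1 - k) * f k + f k)); last first.
  by move=> k /andP[_ ltk]; rewrite subSn // mulSn addnC.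
by rewrite big_split /= [in RHS]big_nat_recr //= subnn mul0n addn0.
Qed.

Lemma double_sum_subn n : 2 * \sum_(1 <= k < n) (n - k) = n * (n - 1).
Proof.
elim: n => [|n IHn]; first by rewrite big_geq.
case: n IHn => [|n] IHn; first by rewrite big_geq.
rewrite (eq_big_nat _ _ (F2 := fun k => (n.+1 - k) + 1)); last by move=> k ltk; lia.
rewrite big_split /= sum_nat_const_nat big_nat_recr //= subnn addn0.
by move: IHn; lia.
Qed.

Lemma sum_shift_weights (h : nat -> nat) n :
  \sum_(k < n) k * (n - 1 - k) * h k.+1 = \sum_(1 <= k < n) (n - k) * (k - 1) * h k.
Proof.
case: n => [|n]; first by rewrite big_ord0 big_geq.
rewrite -(big_mkord xpredT (fun k => k * (n.+1 - 1 - k) * h k.+1)) big_nat_recr //=.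
rewrite subn1 subnn muln0 mul0n addn0 big_add1 /=.
by apply: eq_big_nat => k _; rewrite subSS subn1 /= [k * _]mulnC.
Qed.

Lemma double_wiener_spiro_fc n s : 0 < n -> spiro_data n s ->
  2 * wiener (spiro_adj n s) = 10 * \sum_(1 <= k < n) (n - k) * fc s k + 45 * n * n + 9 * n.
Proof.
move=> n_gt0 hs; rewrite double_wiener_spiro //.
rewrite (eq_bigr (fun k : 'I_n =>
   54 + 90 * (n - 1) + 50 * (k * (n - 1 - k) * hexdist 0 (s k.+1)))); last first.
  by move=> k _; rewrite !mulnA.
rewrite big_split /= big_const_ord iter_addn_0 -big_distrr /=.
rewrite (sum_shift_weights (fun k => hexdist 0 (s k))).
rewrite [in RHS](eq_big_nat _ _
   (F2 := fun k => 5 * ((n - k) * (k - 1) * hexdist 0 (s k)) + 9 * (n - k))); last first.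
  by move=> k ltk; rewrite (fc_cutdist hs ltk); ring.
rewrite big_split /= -!big_distrr /=.
have := double_sum_subn n.
move: (\sum_(1 <= k < n) (n - k)) (\sum_(1 <= k < n) (n - k) * (k - 1) * _) => S X.
nia.
Qed.

Local Open Scope ring_scope.

Theorem theorem2p2 (n : nat) (s : nat -> nat) :
  (1 <= n)%N -> spiro_data n s ->
  let W : rat := (wiener (spiro_adj n s))%:R in
  W = 5 * (\sum_(1 <= k < n) \sum_(1 <= i < k.+1) (fc s i)%:R)
        + 45 / 2 * (n%:R) ^+ 2 + 9 / 2 * n%:R
  /\
  W = 5 * (\sum_(1 <= k < n) ((n - k)%N)%:R * (fc s k)%:R)
        + 45 / 2 * (n%:R) ^+ 2 + 9 / 2 * n%:R.
Proof.
move=> n_gt0 hs W; pose Y := (\sum_(1 <= k < n) (n - k) * fc s k)%N.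
have sumsE : \sum_(1 <= k < n) \sum_(1 <= i < k.+1) ((fc s i)%:R : rat) = Y%:R.
  by rewrite /Y -sum_partial_sums natr_sum; apply: eq_bigr => k _; rewrite natr_sum.
have weightedE : \sum_(1 <= k < n) ((n - k)%N)%:R * ((fc s k)%:R : rat) = Y%:R.
  by rewrite /Y natr_sum; apply: eq_bigr => k _; rewrite natrM.
have := congr1 (fun m => m%:R : rat) (double_wiener_spiro_fc n_gt0 hs).
rewrite sumsE weightedE -/Y /= !natrD !natrM expr2 -/W; split; lra.
Qed.
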